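(* For $t \in \{0,1,\dots,T\}$ let \[\varphi(t) := \sum_{s=1}^t \nabla L^s(\mathbf{w}^s)\cdot(\mathbf{w}^s - \mathbf{w}^{s+1}) + 19 m^2\gamma^2\eta (T-t) - 4\gamma\sum_{i=1}^m \ln w_i^{t+1},\] where $\nabla L^s(\mathbf{w}^s) = (\partial_1 L^s(\mathbf{w}^s),\dots,\partial_m L^s(\mathbf{w}^s))$. Fix $\alpha\in(0,1/2)$, $m$, $n$. For all sufficiently large $T$, in every run of Algorithm 1 in which the small gradient assumption holds, $\varphi(t)$ is a decreasing function of $t$.
   Context: Setting. There are $m$ experts and $n$ outcomes; $\Delta^k$ is the probability simplex in $\mathbb{R}^k$. For reports $\mathbf{p}^1,\dots,\mathbf{p}^m\in\Delta^n$ and $\mathbf{w}\in\Delta^m$, the logarithmic pool is $p^*_j(\mathbf{w}) = \frac{\prod_k (p^k_j)^{w_k}}{\sum_{\ell}\prod_k (p^k_\ell)^{w_k}}$. At each time $t\in[T]$, reports $\mathbf{p}^{t,1},\dots,\mathbf{p}^{t,m}$ and an outcome $j_t$ are revealed, with loss $L^t(\mathbf{w}) := -\ln p^*_{j_t}(\mathbf{w})$ and, by convention, $\partial_i L^t(\mathbf{w}) := \sum_{\ell} p^*_\ell(\mathbf{w}) \ln p^{t,i}_\ell - \ln p^{t,i}_{j_t}$. Algorithm 1 (parameter $\alpha \in (0,1/2)$): $R(\mathbf{w}) = -\frac{1}{\alpha}\sum_i w_i^\alpha$, $\eta = \frac{1}{\sqrt{T}\ln T}\cdot\frac{1}{12 m^{(1+\alpha)/2}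 n}$, $\mathbf{w}^1 = (1/m,\dots,1/m)$, $\eta_0=+\infty$. For $t=1,\dots,T$: if $\eta \le \min_i (w_i^t)^\alpha$ set $\eta_t = \min(\eta_{t-1},\eta)$, else $\eta_t = \min(\eta_{t-1}, \min_i w_i^t)$; then $\mathbf{w}^{t+1}\in\Delta^m$ is defined by $-(w_i^{t+1})^{\alpha-1} = -(w_i^t)^{\alpha-1} - \eta_t\partial_i L^t(\mathbf{w}^t) + c$ for all $i$, with $c$ the unique constant making $\sum_i w_i^{t+1}=1$. Let $\gamma := 12 n \ln T$. The small gradient assumption holds for a run if for every $t\in[T]$ and $i\in[m]$: $-\frac{\gamma}{w_i^t} \le \partial_i L^t(\mathbf{w}^t) \le \gamma$. *)

From HB Require Import structures.
From mathcomp Require Import all_boot all_order all_algebra.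
From mathcomp Require Import all_classical all_reals all_analysis.
Set Implicit Arguments. Unset Strict Implicit. Unset Printing Implicit Defensive.
Import Order.TTheory GRing.Theory Num.Theory.
Local Open Scope ring_scope.

Section Defs.
Variable R : realType.
Variables m n : nat.

(* reports: p t i j = p^{t,i}_j ; outcomes: jt t = j_t *)
Definition reports := nat -> 'I_m -> 'I_n -> R.

Definition in_simplex_pos k (x : 'I_k -> R) : Prop :=
  (forall i, 0 < x i) /\ \sum_i x i = 1.

Definition logpool (p : reports) (t : nat) (w : 'I_m -> R) (j : 'I_n) : R :=
  (\prod_k (p t k j) `^ (w k)) / \sum_l \prod_k (p t k l) `^ (w k).

Definition gradL (p : reports) (jt : nat -> 'I_n) (t : nat) (w : 'I_m -> R)
  (i : 'I_m) : R :=
  \sum_l logpool p t w l * ln (p t i l) - ln (p t i (jt t)).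

Definition eta_alg (alpha : R) (T : nat) : R :=
  (Num.sqrt (T%:R) * ln (T%:R))^-1 * (12 * (m%:R) `^ ((1 + alpha) / 2) * n%:R)^-1.

Definition gamma_of (T : nat) : R := 12 * n%:R * ln (T%:R).

(* minimum over 'I_m; 1 is the neutral element (exact for weights in the
   simplex, which are <= 1, when m >= 1) *)
Definition min_over (f : 'I_m -> R) : R := \big[Num.min/1]_i f i.

(* (w, etas) is a run of Algorithm 1 with horizon T on reports p, outcomes jt.
   w t is w^t (t = 1 .. T+1); etas t is eta_t (t = 1 .. T); eta_0 = +oo. *)
Definition is_run (alpha : R) (T : nat) (p : reports) (jt : nat -> 'I_n)
  (w : nat -> 'I_m -> R) (etas : nat -> R) : Prop :=
  (forall i, w 1%N i = (m%:R)^-1) /\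
  forall t, (1 <= t <= T)%N ->
    let eta := eta_alg alpha T in
    let x := if [forall i, eta <= (w t i) `^ alpha] then eta
             else min_over (w t) in
    etas t = (if t == 1%N then x else Num.min (etas t.-1) x) /\
    in_simplex_pos (w t.+1) /\
    exists c : R, forall i,
      - (w t.+1 i) `^ (alpha - 1) =
      - (w t i) `^ (alpha - 1) - etas t * gradL p jt t (w t) i + c.

Definition small_gradient (T : nat) (p : reports) (jt : nat -> 'I_n)
  (w : nat -> 'I_m -> R) : Prop :=
  forall t, (1 <= t <= T)%N -> forall i,
    - gamma_of T / w t i <= gradL p jt t (w t) i /\
    gradL p jt t (w t) i <= gamma_of T.

Definition phi (alpha : R) (T : nat) (p : reports) (jt : nat -> 'I_n)
  (w : nat -> 'I_m -> R) (t : nat) : R :=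
  \sum_(1 <= s < t.+1) \sum_i gradL p jt s (w s) i * (w s i - w s.+1 i)
  + 19 * (m%:R) ^+ 2 * (gamma_of T) ^+ 2 * eta_alg alpha T * ((T%:R) - (t%:R))
  - 4 * gamma_of T * \sum_i ln (w t.+1 i).

End Defs.

(* Write u = w^t, v = w^(t+1), P = u^(alpha-1) and a = eta_t g - c, so that one
   step of Algorithm 1 reads v^(alpha-1) = P + a.  Convexity of x |-> x^(alpha-1)
   turns a into two-sided bounds on u - v, and since both u and v sum to 1 this
   pins down the normalizing constant: c <= eta_t gamma, and -c = O(m eta_t gamma)
   by Chebyshev's sum inequality (u and 1/P are similarly ordered).  Each term
   g_i (u_i - v_i) + 4 gamma (ln u_i - ln v_i) is then O(gamma eta_t gamma m / P_i),
   and summing over i with P_i >= 1 gives the decrease of phi.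
   All of this needs eta_t gamma <= eps u_i^alpha.  The same bound on a shows that
   u_i^(alpha-1) grows by at most 3 m eta gamma per step, hence stays below
   4 m sqrt T, and since alpha < 1/2 this gives eps u_i^alpha >= 1 / sqrt T >= eta gamma
   once T is large. *)

From HB Require Import structures.
From mathcomp Require Import all_boot all_order all_algebra.
From mathcomp Require Import all_classical all_reals all_analysis.
From mathcomp Require Import ring lra.
Set Implicit Arguments. Unset Strict Implicit. Unset Printing Implicit Defensive.
Import Order.TTheory GRing.Theory Num.Theory.
Local Open Scope ring_scope.

Section RealFacts.
Variable R : realType.
Implicit Types (r s x z : R).

Lemma ln_le_subr1 x : 0 < x -> ln x <= x - 1.
Proof. by move=> x0; have := @le_ln1Dx R (x - 1); rewrite [1 + _]addrC subrK; apply; lra. Qed.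

Lemma powR_ge1 x r : 0 < x -> x <= 1 -> r <= 0 -> 1 <= x `^ r.
Proof.
move=> x0 x1 r0; rewrite -ler_ln ?posrE ?powR_gt0 // ln1 ln_powR.
by rewrite mulr_le0 ?ln_le0.
Qed.

Lemma powR_le1 x r : 0 < x -> x <= 1 -> 0 <= r -> x `^ r <= 1.
Proof.
move=> x0 x1 r0; rewrite -ler_ln ?posrE ?powR_gt0 // ln1 ln_powR.
by rewrite mulr_ge0_le0 ?ln_le0.
Qed.

Lemma le_powR_self x r : 0 < x -> x <= 1 -> 0 < r -> r <= 1 -> x <= x `^ r.
Proof.
move=> x0 x1 r0 r1; rewrite -ler_ln ?posrE ?powR_gt0 // ln_powR.
have := ln_le0 x1; nra.
Qed.

Lemma powR_tangent r x z : r <= 0 -> 0 < x -> 0 < z ->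
  - r * (x - z) * x `^ r <= (z `^ r - x `^ r) * x.
Proof.
move=> r0 x0 z0.
have zr : z `^ r = x `^ r * expR (r * (ln z - ln x)).
  by rewrite /powR !gt_eqF // -expRD; congr expR; ring.
have ln_zx : r * (z / x - 1) <= r * (ln z - ln x).
  by rewrite ler_wnM2l // -ln_div ?posrE // ln_le_subr1 ?divr_gt0.
have bern : x `^ r * (1 + r * (z / x - 1)) <= z `^ r.
  rewrite zr ler_wpM2l ?powR_ge0 //; have := expR_ge1Dx (r * (ln z - ln x)); lra.
have := ler_wpM2r (ltW x0) bern.
have -> : x `^ r * (1 + r * (z / x - 1)) * x = x `^ r * x + r * x `^ r * (z - x).
  by field; rewrite gt_eqF.
lra.
Qed.

Lemma inv_le_scaled_powR al K s eps x : 0 < al < 1 / 2 -> 1 <= K -> 0 < eps <= 1 ->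
  0 < x -> x `^ (al - 1) <= K * s -> 1 <= s ->
  (ln K - ln eps) / (1 - 2 * al) <= ln s -> s^-1 <= eps * x `^ al.
Proof.
move=> /andP[al0 al1] K1 /andP[eps0 eps1] x0 hx s1 hs.
have s0 : 0 < s by lra.
have lnx : (al - 1) * ln x <= ln K + ln s.
  by rewrite -lnM ?posrE -?ln_powR ?ler_ln ?posrE ?powR_gt0 ?mulr_gt0 //; lra.
rewrite -ler_ln ?posrE ?invr_gt0 ?mulr_gt0 ?powR_gt0 //.
rewrite lnV ?posrE // lnM ?posrE ?powR_gt0 // ln_powR.
move: hs; rewrite ler_pdivrMr; last lra.
have := ln_ge0 K1; have := ln_le0 eps1; have := ln_ge0 s1.
nra.
Qed.

End RealFacts.

Lemma ler_term_sum (R : realType) k (F : 'I_k -> R) j :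
  (forall i, 0 <= F i) -> F j <= \sum_i F i.
Proof.
by move=> F_ge0; rewrite (bigD1 j) //= lerDl; apply: sumr_ge0 => i _.
Qed.

Lemma chebyshev_sum (R : realType) k (x y : 'I_k -> R) :
  (forall i j, 0 <= (x i - x j) * (y i - y j)) ->
  (\sum_i x i) * (\sum_i y i) <= k%:R * \sum_i x i * y i.
Proof.
move=> xy_sim.
have row i : \sum_j (x i - x j) * (y i - y j) =
    k%:R * (x i * y i) - x i * \sum_j y j - (\sum_j x j) * y i + \sum_j x j * y j.
  rewrite (eq_bigr (fun j => x i * y i - x i * y j - x j * y i + x j * y j));
    last by move=> j _; ring.
  by rewrite big_split /= !sumrB sumr_const card_ord -mulr_sumr -mulr_suml mulr_natl.
have : 0 <= \sum_i \sum_j (x i - x j) * (y i - y j).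
  by apply: sumr_ge0 => i _; apply: sumr_ge0.
rewrite (eq_bigr _ (fun i _ => row i)) big_split /= !sumrB -!mulr_sumr -!mulr_suml.
rewrite sumr_const card_ord -mulr_natl; lra.
Qed.

Section Simplex.
Variables (R : realType) (k : nat) (x : 'I_k -> R).
Hypothesis x_simplex : in_simplex_pos x.

Lemma simplex_le1 i : x i <= 1.
Proof. by case: x_simplex => x_gt0 <-; apply: ler_term_sum => j; exact: ltW. Qed.

Lemma simplex_exists_ge_inv : exists i, 1 <= k%:R * x i.
Proof.
case: x_simplex => _ x_sum.
have [i0] : exists i0 : 'I_k, True.
  move: (k) (x) x_sum => [|k'] y; last by exists ord0.
  by rewrite big_ord0 => /eqP; rewrite eq_sym oner_eq0.
move=> _; apply/existsP; apply: contraT => /existsPn small.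
have : \sum_i k%:R * x i < \sum_(i < k) 1.
  by apply: ltr_sum => [|i _]; [apply/hasP; exists i0 | rewrite ltNge small].
by rewrite -mulr_sumr x_sum mulr1 sumr_const card_ord ltxx.
Qed.

Lemma simplex1_eq1 i : k = 1%N -> x i = 1.
Proof.
case: x_simplex => _ + k1; move: (k) k1 (x) i => _ -> y i.
by rewrite big_ord1 (ord1 i).
Qed.

End Simplex.

(* One step of Algorithm 1: u = w^t, v = w^(t+1), e = eta_t, g = grad L^t(w^t) and
   c the normalizing constant of the update. *)
Section MirrorStep.
Variables (R : realType) (m : nat) (al e ga c eps : R) (u v g : 'I_m -> R).
Local Notation M := (m%:R : R).
Local Notation P i := (u i `^ (al - 1)).
Local Notation Q i := (v i `^ (al - 1)).

Hypotheses (al_gt0 : 0 < al) (al_lt_half : al < 1 / 2).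
Hypotheses (e_gt0 : 0 < e) (ga_gt0 : 0 < ga) (eps_gt0 : 0 < eps).
Hypotheses (u_simplex : in_simplex_pos u) (v_simplex : in_simplex_pos v).
Hypothesis g_ge : forall i, - ga / u i <= g i.
Hypothesis g_le : forall i, g i <= ga.
Hypothesis mirror_step : forall i, Q i = P i + (e * g i - c).
Hypothesis step_small : forall i, e * ga <= eps * u i `^ al.
Hypothesis eps_small : eps * M ^+ 2 <= 1 / 10000.

Let a i := e * g i - c.

Let al1_le0 : al - 1 <= 0. Proof. have := al_lt_half; lra. Qed.

Let u_gt0 i : 0 < u i. Proof. by case: u_simplex. Qed.
Let v_gt0 i : 0 < v i. Proof. by case: v_simplex. Qed.
Let u_le1 i : u i <= 1. Proof. exact: simplex_le1. Qed.
Let P_gt0 i : 0 < P i. Proof. exact: powR_gt0. Qed.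
Let Q_gt0 i : 0 < Q i. Proof. exact: powR_gt0. Qed.
Let P_ge1 i : 1 <= P i. Proof. by apply: powR_ge1; [exact: u_gt0 | exact: u_le1 | exact: al1_le0]. Qed.
Let Q_eq i : Q i = P i + a i. Proof. exact: mirror_step. Qed.

Let uP_eq i : u i * P i = u i `^ al. Proof. by rewrite mulr_powRB1 // ltW. Qed.
Let uP_le1 i : u i * P i <= 1. Proof. by rewrite uP_eq powR_le1 // ltW. Qed.
Let step_small_uP i : e * ga <= eps * (u i * P i). Proof. by rewrite uP_eq. Qed.

Let imax := xchoose (simplex_exists_ge_inv u_simplex).
Let M_u_imax : 1 <= M * u imax := xchooseP (simplex_exists_ge_inv u_simplex).

Let M_ge1 : 1 <= M.
Proof. have := u_le1 imax; have := ler0n R m; have := M_u_imax; nra. Qed.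
Let M2_ge1 : 1 <= M ^+ 2. Proof. have := M_ge1; nra. Qed.
Let epsM_small : eps * M <= 1 / 10000.
Proof. have := eps_small; have := M_ge1; have := eps_gt0; nra. Qed.
Let eps_le : eps <= 1 / 10000.
Proof. have := epsM_small; have := M_ge1; have := eps_gt0; nra. Qed.
Let ega_le_eps : e * ga <= eps.
Proof. have := step_small_uP imax; have := uP_le1 imax; have := eps_gt0; nra. Qed.

Let tangent_u i : (1 - al) * (u i - v i) * P i <= a i * u i.
Proof.
have := @powR_tangent R (al - 1) (u i) (v i) al1_le0 (u_gt0 i) (v_gt0 i).
by rewrite Q_eq opprB (addrC (P i)) addrK.
Qed.

Let tangent_v i : a i * v i <= (1 - al) * (u i - v i) * Q i.
Proof.
have := @powR_tangent R (al - 1) (v i) (u i) al1_le0 (v_gt0 i) (u_gt0 i).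
rewrite Q_eq opprB; nra.
Qed.

Let ln_ratio_le i : (1 - al) * (ln (u i) - ln (v i)) <= a i / P i.
Proof.
have -> : (1 - al) * (ln (u i) - ln (v i)) = ln (Q i / P i).
  by rewrite ln_div ?posrE // !ln_powR; ring.
apply: le_trans (ln_le_subr1 (divr_gt0 (Q_gt0 i) (P_gt0 i))) _.
by rewrite Q_eq mulrDl divff ?gt_eqF // addrAC subrr add0r.
Qed.

Let sum_shift_eq0 : \sum_i (1 - al) * (u i - v i) = 0.
Proof.
case: u_simplex v_simplex => _ su [_ sv].
by rewrite -mulr_sumr sumrB su sv subrr mulr0.
Qed.

Let eg_ge i : - (e * ga) <= e * g i * u i.
Proof. have := g_ge i; rewrite ler_pdivrMr // => gu_ge; have := u_gt0 i; have := e_gt0; nra. Qed.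

Let sum_uP_gt0 : 0 < \sum_i u i / P i.
Proof.
apply: (lt_le_trans (divr_gt0 (u_gt0 imax) (P_gt0 imax))).
by apply: ler_term_sum => i; rewrite divr_ge0 ?ltW.
Qed.

Let normc_le : c <= e * ga.
Proof.
have : 0 <= \sum_i (e * ga - c) * (u i / P i).
  rewrite -[X in X <= _]sum_shift_eq0; apply: ler_sum => i _.
  apply: le_trans (_ : (e * g i - c) * (u i / P i) <= _).
    by rewrite mulrA ler_pdivlMr //; exact: tangent_u.
  apply: ler_wpM2r; first by rewrite divr_ge0 ?ltW.
  by rewrite lerD2r ler_pM2l // g_le.
by rewrite -mulr_sumr pmulr_lge0 // subr_ge0.
Qed.

Let shift_ge j : - (2 * eps * P j) <= a j.
Proof.
have eg_ge' : - (e * ga) / u j <= e * g j by rewrite ler_pdivrMr //; exact: eg_ge.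
have ega_le : e * ga / u j <= eps * P j.
  by rewrite ler_pdivrMr //; have := step_small_uP j; lra.
have := normc_le; have := ega_le_eps; have := P_ge1 j; have := eps_gt0.
rewrite mulNr in eg_ge'; rewrite /a; nra.
Qed.

Let Q_ge j : (1 - 2 * eps) * P j <= Q j.
Proof. have := shift_ge j; rewrite Q_eq; lra. Qed.

Let v_le_u_of_shift j : 0 <= a j -> v j <= u j.
Proof.
move=> a_ge0; case: (lerP (v j) (u j)) => // uv.
have alQ : 0 < (1 - al) * Q j by rewrite mulr_gt0 //; have := al_lt_half; lra.
have vu : 0 < v j - u j by rewrite subr_gt0.
have := tangent_v j; have := mulr_gt0 vu alQ; have := v_gt0 j; nra.
Qed.

Let v_sub_u_le j : v j - u j <= 7 * eps * u j.
Proof.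
have := eps_gt0; have := eps_le; have := u_gt0 j => uj0 eps1 eps0.
case: (lerP 0 (a j)) => [/v_le_u_of_shift|a_lt0]; first by nra.
case: (lerP (v j - u j) 0) => [|vu_gt0]; first by nra.
have vu_Q_le : (1 - al) * (v j - u j) * Q j <= 2 * eps * P j * v j.
  have := tangent_v j; have := shift_ge j; have := v_gt0 j; nra.
have vu_Q_ge : 1 / 2 * (v j - u j) * ((1 - 2 * eps) * P j) <= (1 - al) * (v j - u j) * Q j.
  apply: ler_pM; [lra | by rewrite mulr_ge0 ?ltW //; lra | | exact: Q_ge].
  by have := al_lt_half; nra.
have : 1 / 2 * (v j - u j) * (1 - 2 * eps) <= 2 * eps * v j.
  by rewrite -(ler_pM2r (P_gt0 j)); lra.
nra.
Qed.

Let u_sub_v_imax : u imax - v imax <= 7 * eps.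
Proof.
have : 7 * eps * u imax + (u imax - v imax) <= 7 * eps.
  case: u_simplex v_simplex => _ su [_ sv].
  have sum_eq : \sum_j (7 * eps * u j + (u j - v j)) = 7 * eps.
    by rewrite big_split /= -mulr_sumr sumrB su sv subrr addr0 mulr1.
  rewrite -[X in _ <= X]sum_eq.
  by apply: ler_term_sum => j; have := v_sub_u_le j; lra.
have := eps_gt0; have := u_gt0 imax; nra.
Qed.

Let P_imax_le : P imax <= M.
Proof. have := uP_le1 imax; have := M_u_imax; have := P_gt0 imax; have := M_ge1; nra. Qed.

Let eg_imax : - (e * g imax) <= e * ga * M.
Proof.
have egM : 0 <= e * ga * M by rewrite !mulr_ge0 ?ltW //; have := M_ge1; lra.
case: (lerP 0 (e * g imax)) => eg; first lra.
have : - (e * g imax) <= - (e * g imax) * (M * u imax) by have := M_u_imax; nra.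
have : 0 <= M * (e * g imax * u imax + e * ga).
  by apply: mulr_ge0; [have := M_ge1 | have := eg_ge imax]; lra.
lra.
Qed.

(* At imax, where u >= 1/m, also v >= 1/(2m), so tangent_v caps a imax. *)
Let normc_ge_crude : - c <= 16 * eps * M ^+ 2.
Proof.
have := eps_gt0; have := M_ge1; have := M2_ge1 => M2 M1 eps0.
have MM2 : M <= M ^+ 2 by nra.
have egM : e * ga * M <= eps * M ^+ 2.
  by apply: le_trans (_ : eps * M <= _); [have := ega_le_eps | ]; nra.
case: (lerP 0 (a imax)) => a_imax; last by have := eg_imax; rewrite /a in a_imax; nra.
have av_le_Q : a imax * v imax <= 7 * eps * Q imax.
  apply: le_trans (tangent_v imax) _; apply: ler_wpM2r; first exact: ltW.
  have := u_sub_v_imax; have := v_le_u_of_shift a_imax; have := al_gt0; nra.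
have av_le : a imax * v imax <= 7 * eps * (M + a imax).
  by move: av_le_Q; rewrite Q_eq; have := P_imax_le; nra.
have v_imax_ge : 1 <= 2 * M * v imax.
  have := M_u_imax; have := epsM_small; have := u_sub_v_imax; nra.
have a_le_av : a imax <= 2 * M * (a imax * v imax) by nra.
have : a imax * (1 - 14 * eps * M) <= 14 * eps * M ^+ 2.
  have : 2 * M * (a imax * v imax) <= 2 * M * (7 * eps * (M + a imax)).
    by apply: ler_wpM2l => //; lra.
  lra.
have a_imax_le : a imax <= 15 * eps * M ^+ 2 by have := epsM_small; nra.
have := eg_imax; rewrite /a in a_imax_le; lra.
Qed.

Let shift_le_crude j : a j <= 17 * eps * M ^+ 2.
Proof.
have := normc_ge_crude; have := g_le j; have := e_gt0; have := ega_le_eps.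
have := eps_gt0; have := M2_ge1; rewrite /a; nra.
Qed.

(* Once a is known to be tiny, u and v agree to within 1%; the factor absorbs
   that error on the side given by the sign of a j. *)
Let damp j : R := if 0 <= a j then 99 / 100 else 101 / 100.

Let damp_shift_le j : damp j * (a j * u j / P j) <= (1 - al) * (u j - v j).
Proof.
have := P_gt0 j; have := P_ge1 j; have := u_gt0 j; have := eps_gt0.
have := eps_le; have := al_gt0; have := al_lt_half => al1 al0 eps1 eps0 uj Pj1 Pj0.
rewrite /damp mulrA ler_pdivrMr //; case: ifPn => [a_ge0 | a_lt0].
  have vu := v_le_u_of_shift a_ge0.
  set A := 17 * eps * M ^+ 2.
  have A0 : 0 <= A by rewrite /A; have := M2_ge1; nra.
  have A1 : A <= 17 / 10000 by have := eps_small; rewrite /A; lra.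
  have aA : a j <= A := shift_le_crude j.
  have uv : (1 - al) * (u j - v j) <= A * u j.
    rewrite -(ler_pM2r Pj0); apply: le_trans (tangent_u j) _.
    by have := mulr_ge0 A0 (ltW uj); nra.
  have v_ge : u j * (1 - 2 * A) <= v j by nra.
  have Q_le : Q j <= P j * (1 + A) by rewrite Q_eq; nra.
  have := tangent_v j; have := ler_wpM2l a_ge0 v_ge => av_ge av_le.
  have Q_shift_le : (1 - al) * (u j - v j) * Q j <= (1 - al) * (u j - v j) * (P j * (1 + A)).
    by apply: ler_wpM2l => //; apply: mulr_ge0; lra.
  have := mulr_ge0 a_ge0 (ltW uj); nra.
rewrite -ltNge in a_lt0.
have vu : v j <= u j * (1 + 7 * eps) by have := v_sub_u_le j; lra.
have vP : v j * P j <= 101 / 100 * u j * Q j.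
  have := Q_ge j; have := ler_wpM2r (ltW Pj0) vu; have := mulr_gt0 uj Pj0; nra.
have avP_ge : 101 / 100 * (a j * u j) * Q j <= a j * v j * P j.
  by have := ler_wnM2l (ltW a_lt0) vP; lra.
have avP_le : a j * v j * P j <= (1 - al) * (u j - v j) * Q j * P j.
  by apply: ler_wpM2r; [exact: ltW | exact: tangent_v].
rewrite -(ler_pM2r (Q_gt0 j)); lra.
Qed.

Let P_anti i j : u i <= u j -> P j <= P i.
Proof.
move=> uij; rewrite -ler_ln ?posrE // !ln_powR.
by rewrite ler_wnM2l // ler_ln ?posrE.
Qed.

Let sum_invP_le : \sum_i (P i)^-1 <= M * \sum_i u i / P i.
Proof.
have -> : \sum_i u i / P i = \sum_i (P i)^-1 * u i.
  by apply: eq_bigr => i _; rewrite mulrC.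
have := @chebyshev_sum R m (fun i => (P i)^-1) u.
case: u_simplex => _ ->; rewrite mulr1; apply => i j.
case: (lerP (u i) (u j)) => uij.
  by rewrite mulr_le0 // subr_le0 // lef_pV2 ?posrE ?P_anti.
by rewrite mulr_ge0 // subr_ge0 ?lef_pV2 ?posrE ?P_anti ?ltW.
Qed.

Let normc_ge : - c <= 103 / 100 * M * (e * ga).
Proof.
have ega0 : 0 <= e * ga by rewrite mulr_ge0 ?ltW.
have M1 := M_ge1.
case: (lerP 0 c) => c0; first by nra.
have term_ge j : 99 / 100 * (- c) * (u j / P j) - 101 / 100 * (e * ga) * (P j)^-1
    <= damp j * (a j * u j / P j).
  have Pj := invr_gt0 (P j); rewrite P_gt0 in Pj.
  have := mulr_ge0 (_ : 0 <= e * g j * u j + e * ga) (ltW Pj).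
  have := mulr_ge0 (_ : 0 <= - c) (mulr_ge0 (ltW (u_gt0 j)) (ltW Pj)).
  have := mulr_ge0 ega0 (ltW Pj); have := eg_ge j.
  by rewrite /damp /a; case: ifP => _; nra.
have : \sum_j (99 / 100 * (- c) * (u j / P j) - 101 / 100 * (e * ga) * (P j)^-1) <= 0.
  rewrite -[X in _ <= X]sum_shift_eq0; apply: ler_sum => j _.
  exact: le_trans (term_ge j) (damp_shift_le j).
rewrite sumrB -!mulr_sumr.
have := sum_invP_le; have := sum_uP_gt0; nra.
Qed.

Let B := e * ga * (1 + 103 / 100 * M).

Let B_ge0 : 0 <= B.
Proof. by rewrite !mulr_ge0 ?ltW //; have := M_ge1; lra. Qed.

Let shift_le j : a j <= B.
Proof. have := normc_ge; have := g_le j; have := e_gt0; rewrite /B /a; nra. Qed.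

Let regret_term_le j :
  g j * (u j - v j) + 4 * ga * (ln (u j) - ln (v j)) <= 10 * ga * B * (P j)^-1.
Proof.
have Pj : 0 < (P j)^-1 by rewrite invr_gt0.
have := al_lt_half; have := al_gt0; have := ga_gt0 => ga0 al0 al1.
have bound_ge0 : 0 <= 10 * ga * B * (P j)^-1 by rewrite !mulr_ge0 ?ltW.
case: (lerP 0 (a j)) => [a_ge0 | a_lt0].
  have vu := v_le_u_of_shift a_ge0.
  have aP : 0 <= a j * (P j)^-1 by apply: mulr_ge0 => //; exact: ltW.
  have gu_le : g j * (u j - v j) <= ga * (u j - v j).
    by apply: ler_wpM2r; rewrite ?subr_ge0.
  have uv_le : (1 - al) * (u j - v j) <= a j * (P j)^-1.
    rewrite ler_pdivlMr //; apply: (le_trans (tangent_u j)).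
    by have := u_le1 j; nra.
  have ln_le := ln_ratio_le j.
  have ln_term_le : 4 * ga * (ln (u j) - ln (v j)) <= 4 * ga * (2 * (a j * (P j)^-1)).
    by apply: ler_wpM2l; [lra | nra].
  have g_term_le : ga * (u j - v j) <= ga * (2 * (a j * (P j)^-1)).
    by apply: ler_wpM2l; [lra | nra].
  have := mulr_ge0 (_ : 0 <= B - a j) (mulr_ge0 (ltW ga0) (ltW Pj)).
  by have := shift_le j; lra.
have uv : u j < v j.
  case: (lerP (v j) (u j)) => // vu.
  have : 0 <= (1 - al) * (u j - v j) * P j.
    by apply: mulr_ge0; [apply: mulr_ge0; lra | exact: ltW].
  have : a j * u j < 0 by rewrite pmulr_llt0.
  by have := tangent_u j; lra.
have g_term_le : g j * (u j - v j) <= ga / u j * (v j - u j).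
  have : - g j * (v j - u j) <= ga / u j * (v j - u j).
    by apply: ler_wpM2r; [lra | have := g_ge j; rewrite mulNr; lra].
  lra.
have ln_le : ln (u j) - ln (v j) <= - ((v j - u j) / v j).
  have -> : - ((v j - u j) / v j) = u j / v j - 1 by field; rewrite gt_eqF.
  by rewrite -ln_div ?posrE // ln_le_subr1 ?divr_gt0.
have inv_u : (u j)^-1 <= 4 * (v j)^-1.
  rewrite -(ler_pM2r (v_gt0 j)) -mulrA mulVf ?gt_eqF // mulr1 mulrC ler_pdivrMr //.
  by have := v_sub_u_le j; have := eps_le; have := eps_gt0; have := u_gt0 j; nra.
have ln_term_le : 4 * ga * (ln (u j) - ln (v j)) <= 4 * ga * - ((v j - u j) / v j).
  by apply: ler_wpM2l => //; lra.
have gvu : 0 <= ga * (v j - u j) by apply: mulr_ge0; lra.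
by have := ler_wpM2l gvu inv_u; lra.
Qed.

Let sum_regret_le :
  \sum_j g j * (u j - v j) + 4 * ga * \sum_j (ln (u j) - ln (v j)) <= 10 * ga * B * M.
Proof.
rewrite mulr_sumr -big_split /=.
apply: (le_trans (ler_sum _ (fun j _ => regret_term_le j))).
rewrite -mulr_sumr; apply: ler_wpM2l.
  by apply: mulr_ge0 => //; apply: mulr_ge0 => //; exact: ltW.
apply: le_trans (_ : _ <= \sum_(j < m) (1 : R)) _; last by rewrite sumr_const card_ord.
by apply: ler_sum => j _; rewrite invf_le1 ?P_ge1.
Qed.

Let step_regret_le :
  \sum_j g j * (u j - v j) + 4 * ga * \sum_j (ln (u j) - ln (v j))
    <= 19 * M ^+ 2 * ga ^+ 2 * e.
Proof.
have rhs_ge0 : 0 <= 19 * M ^+ 2 * ga ^+ 2 * e.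
  by rewrite pmulr_lge0 // pmulr_lge0 ?exprn_gt0 // mulr_ge0 ?sqr_ge0.
have [m1 | m_ne1] := eqVneq m 1%N.
  have uv j : u j = v j by rewrite !simplex1_eq1.
  under eq_bigr do rewrite uv subrr mulr0.
  by under [X in _ + _ * X]eq_bigr do rewrite uv subrr; rewrite !big1 // mulr0 addr0.
have M2 : 2 <= M.
  have : (1 < m)%N by rewrite ltn_neqAle eq_sym m_ne1 -(ler_nat R) M_ge1.
  by rewrite -(ler_nat R).
apply: le_trans sum_regret_le _; rewrite /B.
have -> : 10 * ga * (e * ga * (1 + 103 / 100 * M)) * M
    = e * ga ^+ 2 * (10 * (1 + 103 / 100 * M) * M) by ring.
have -> : 19 * M ^+ 2 * ga ^+ 2 * e = e * ga ^+ 2 * (19 * M ^+ 2) by ring.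
by apply: ler_wpM2l; [rewrite mulr_ge0 ?sqr_ge0 ?ltW | nra].
Qed.

Let step_power_le j : Q j <= P j + 3 * M * e * ga.
Proof.
rewrite Q_eq lerD2l; apply: le_trans (shift_le j) _; rewrite /B.
have := mulr_gt0 e_gt0 ga_gt0; have := M_ge1; nra.
Qed.

Lemma mirror_step_bounds :
  (forall j, Q j <= P j + 3 * M * e * ga) /\
  \sum_j g j * (u j - v j) + 4 * ga * \sum_j (ln (u j) - ln (v j))
    <= 19 * M ^+ 2 * ga ^+ 2 * e.
Proof. by split; [exact: step_power_le | exact: step_regret_le]. Qed.

End MirrorStep.

Section Run.
Variables (R : realType) (alpha : R) (m n T : nat).
Variables (p : reports R m n) (jt : nat -> 'I_n) (w : nat -> 'I_m -> R) (etas : nat -> R).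
Hypotheses (alpha_gt0 : 0 < alpha) (alpha_lt_half : alpha < 1 / 2).
Hypotheses (m_gt0 : (0 < m)%N) (n_gt0 : (0 < n)%N) (T_ge2 : (2 <= T)%N).
Hypothesis run : is_run alpha T p jt w etas.
Hypothesis grad_small : small_gradient T p jt w.

Local Notation M := (m%:R : R).
Local Notation eta := (eta_alg m n alpha T).
Local Notation ga := (gamma_of R n T).
Local Notation sT := (Num.sqrt (T%:R : R)).
Let eps : R := (10000 * M ^+ 2)^-1.
Hypothesis T_large : (ln (4 * M) - ln eps) / (1 - 2 * alpha) <= ln sT.

Let Mp : R := M `^ ((1 + alpha) / 2).

Let M_ge1 : 1 <= M. Proof. by rewrite ler1n. Qed.
Let T_ge2R : 2 <= (T%:R : R). Proof. by rewrite (ler_nat R 2 T). Qed.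
Let T_gt0 : 0 < (T%:R : R). Proof. by have := T_ge2R; lra. Qed.
Let lnT_gt0 : 0 < ln (T%:R : R). Proof. by apply: ln_gt0; have := T_ge2R; lra. Qed.
Let sT_sqr : sT ^+ 2 = T%:R. Proof. by rewrite sqr_sqrtr // ltW. Qed.
Let sT_ge1 : 1 <= sT. Proof. by rewrite -[X in X <= _]sqrtr1 ler_sqrt; have := T_ge2R; lra. Qed.
Let sT_gt0 : 0 < sT. Proof. by have := sT_ge1; lra. Qed.
Let Mp_ge1 : 1 <= Mp.
Proof.
have M_gt0 : 0 < M by have := M_ge1; lra.
rewrite -ler_ln ?posrE ?powR_gt0 // ln1 ln_powR.
by rewrite mulr_ge0 ?ln_ge0 //; have := alpha_gt0; lra.
Qed.
Let Mp_gt0 : 0 < Mp. Proof. by have := Mp_ge1; lra. Qed.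

Let eta_ga_eq : eta * ga = (sT * Mp)^-1.
Proof.
by rewrite /eta_alg /gamma_of -/Mp; field; rewrite !gt_eqF // ltr0n.
Qed.

Let ga_gt0 : 0 < ga.
Proof. by rewrite /gamma_of !mulr_gt0 // ltr0n. Qed.

Let eta_ga_gt0 : 0 < eta * ga. Proof. by rewrite eta_ga_eq invr_gt0 mulr_gt0. Qed.

Let eta_gt0 : 0 < eta. Proof. by rewrite -(pmulr_lgt0 _ ga_gt0). Qed.

Let eta_ga_le : eta * ga <= sT^-1.
Proof. by rewrite eta_ga_eq lef_pV2 ?posrE ?mulr_gt0 // ler_peMr // ltW. Qed.

Let T_eta_ga_le : T%:R * (eta * ga) <= sT.
Proof.
rewrite eta_ga_eq ler_pdivrMr ?mulr_gt0 // -[X in X <= _]sT_sqr expr2.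
by rewrite ler_pM2l // ler_peMr // ltW.
Qed.

Let eps_gt0 : 0 < eps. Proof. by rewrite invr_gt0; have := M_ge1; nra. Qed.
Let eps_M2 : eps * M ^+ 2 <= 1 / 10000.
Proof.
rewrite (_ : eps * M ^+ 2 = 1 / 10000) // /eps.
by field; rewrite gt_eqF //; have := M_ge1; lra.
Qed.
Let eps_le1 : eps <= 1. Proof. by have := eps_M2; have := M_ge1; nra. Qed.

(* eta_t is a running minimum, hence the positivity of the previous one. *)
Let run_inv t := [/\ in_simplex_pos (w t),
  forall i, w t i `^ (alpha - 1) <= M + (t.-1)%:R * (3 * M * eta * ga)
  & (1 < t)%N -> 0 < etas t.-1].

Let run_inv1 : run_inv 1.
Proof.
have [w1 _] := run.
have M_gt0 : 0 < M by have := M_ge1; lra.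
split => //; first split => [i|].
- by rewrite w1 invr_gt0.
- rewrite (eq_bigr (fun=> M^-1)) => [|i _]; last by rewrite w1.
  by rewrite sumr_const card_ord -(mulr_natr M^-1) mulVf ?gt_eqF.
- move=> i; rewrite w1 /= mul0r addr0.
  rewrite -ler_ln ?posrE ?powR_gt0 ?invr_gt0 // ln_powR lnV ?posrE //.
  by have := ln_ge0 M_ge1; have := alpha_gt0; nra.
Qed.

Let etas_bounds t : (1 <= t <= T)%N -> run_inv t -> 0 < etas t <= eta.
Proof.
move=> tT [w_simplex _ etas_prev].
have [_ /(_ t tT) [-> _]] := run.
set x := (if [forall i, _] then _ else _).
have x_bounds : 0 < x <= eta.
  rewrite /x; case: ifPn => [_ | /forallPn [i]]; first by rewrite eta_gt0 lexx.
  rewrite -ltNge => eta_gt.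
  have w_le : w t i <= w t i `^ alpha.
    apply: le_powR_self; [by case: w_simplex | exact: simplex_le1 | done | ].
    by have := alpha_lt_half; lra.
  have min_le : min_over (w t) <= w t i by exact: bigmin_le.
  rewrite (le_trans min_le) ?andbT; last by have := eta_gt; lra.
  by apply: lt_bigmin => // j _; case: w_simplex.
case: eqP => [// | t_ne1].
have t_gt1 : (1 < t)%N by case/andP: tT; rewrite leq_eqVlt eq_sym => /predU1P [] // /t_ne1.
case/andP: x_bounds => x_gt0 x_le.
by rewrite lt_min etas_prev // x_gt0 ge_min x_le orbT.
Qed.

Let step_small_run t : (t <= T.+1)%N -> run_inv t ->
  forall i, eta * ga <= eps * w t i `^ alpha.
Proof.
move=> tT [w_simplex w_pow _] i.
apply: le_trans eta_ga_le _.
have [w_gt0 _] := w_simplex.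
apply: (inv_le_scaled_powR (K := 4 * M)) => //.
- by rewrite alpha_gt0 alpha_lt_half.
- by have := M_ge1; lra.
- by rewrite eps_gt0 eps_le1.
apply: le_trans (w_pow i) _.
have t1T : ((t.-1)%:R : R) <= T%:R by rewrite ler_nat; case: (t) tT.
have : (t.-1)%:R * (3 * M * eta * ga) <= 3 * M * sT.
  have M_ge0 : 0 <= 3 * M by have := M_ge1; lra.
  apply: le_trans (_ : T%:R * (3 * M * eta * ga) <= _).
    by apply: ler_wpM2r => //; rewrite -mulrA; exact: mulr_ge0 M_ge0 (ltW eta_ga_gt0).
  by rewrite -mulrA mulrCA ler_wpM2l.
by have := M_ge1; have := sT_ge1; nra.
Qed.

Let run_step t : (1 <= t <= T)%N ->
  in_simplex_pos (w t.+1) /\ exists c, forall i,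
    w t.+1 i `^ (alpha - 1) = w t i `^ (alpha - 1) + (etas t * gradL p jt t (w t) i - c).
Proof.
move=> tT; have [_ /(_ t tT) [_ [w_simplex [c mirror]]]] := run.
by split=> //; exists c => i; have := mirror i; lra.
Qed.

Let step_bounds t : (1 <= t <= T)%N -> run_inv t ->
  (forall i, w t.+1 i `^ (alpha - 1) <= w t i `^ (alpha - 1) + 3 * M * eta * ga) /\
  \sum_i gradL p jt t (w t) i * (w t i - w t.+1 i)
    + 4 * ga * \sum_i (ln (w t i) - ln (w t.+1 i)) <= 19 * M ^+ 2 * ga ^+ 2 * eta.
Proof.
move=> tT inv_t.
have /andP[etas_gt0 etas_le] := etas_bounds tT inv_t.
have small := step_small_run (leq_trans (proj2 (andP tT)) (leqnSn T)) inv_t.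
have [w_simplex _ _] := inv_t.
have [w1_simplex [c mirror]] := run_step tT.
have grad_t := grad_small tT.
have small_t i : etas t * ga <= eps * w t i `^ alpha.
  by apply: le_trans (small i); rewrite ler_pM2r.
have [pow_le regret_le] := mirror_step_bounds alpha_gt0 alpha_lt_half etas_gt0 ga_gt0
  eps_gt0 w_simplex w1_simplex (fun i => proj1 (grad_t i)) (fun i => proj2 (grad_t i))
  mirror small_t eps_M2.
have M_ge0 : 0 <= M by have := M_ge1; lra.
split=> [i|]; [apply: le_trans (pow_le i) _ | apply: le_trans regret_le _].
  rewrite lerD2l; apply: ler_wpM2r; first exact: ltW.
  by apply: ler_wpM2l => //; exact: mulr_ge0.
apply: ler_wpM2l => //.
by apply: mulr_ge0; [apply: mulr_ge0 => //; exact: sqr_ge0 | exact: sqr_ge0].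
Qed.

Let run_inv_succ t : (1 <= t <= T)%N -> run_inv t -> run_inv t.+1.
Proof.
move=> tT inv_t.
have /andP[etas_gt0 _] := etas_bounds tT inv_t.
have [pow_le _] := step_bounds tT inv_t.
have [_ pow_t _] := inv_t.
have [w1_simplex _] := run_step tT.
split=> // i; apply: le_trans (pow_le i) _; have := pow_t i.
have -> : (t.+1.-1%:R : R) = (t.-1)%:R + 1 by rewrite /= natr1 prednK //; case/andP: tT.
lra.
Qed.

Let run_inv_all t : (1 <= t <= T.+1)%N -> run_inv t.
Proof.
elim: t => [//|t IH] tT.
have [-> |t_gt0] := posnP t; first exact: run_inv1.
case/andP: tT => _; rewrite ltnS => tT.
apply: run_inv_succ; first by rewrite t_gt0.
by apply: IH; rewrite t_gt0 (leq_trans tT).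
Qed.

Lemma phi_succ_le t : (t < T)%N -> phi alpha T p jt w t.+1 <= phi alpha T p jt w t.
Proof.
move=> tT.
have t1T : (1 <= t.+1 <= T)%N by rewrite ltn0Sn tT.
have t1T' : (1 <= t.+1 <= T.+1)%N by rewrite ltn0Sn ltnS ltnW.
have [_ regret_le] := step_bounds t1T (run_inv_all t1T').
rewrite sumrB in regret_le.
rewrite /phi big_nat_recr //= -[t.+1%:R]natr1; lra.
Qed.

End Run.

Lemma eventually_le_ln_sqrt (R : realType) (K : R) :
  exists T0 : nat, forall T : nat, (T0 <= T)%N -> K <= ln (Num.sqrt (T%:R : R)).
Proof.
exists (Num.Def.archi_bound (expR K ^+ 2)) => T T0T.
have K2T : expR K ^+ 2 <= T%:R.
  apply/ltW/(lt_le_trans (archi_boundP (sqr_ge0 _))).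
  by rewrite ler_nat.
have KT : expR K <= Num.sqrt (T%:R : R).
  by rewrite -(ger0_norm (ltW (expR_gt0 K))) -sqrtr_sqr ler_sqrt // (le_trans (sqr_ge0 _) K2T).
rewrite -[K]expRK ler_ln ?posrE ?expR_gt0 //.
exact: lt_le_trans (expR_gt0 K) KT.
Qed.

Theorem lemma3 (R : realType) (alpha : R) (m n : nat) :
  0 < alpha < 1 / 2 ->
  exists T0 : nat, forall T : nat, (T0 <= T)%N ->
  forall (p : reports R m n) (jt : nat -> 'I_n)
         (w : nat -> 'I_m -> R) (etas : nat -> R),
    (forall t, (1 <= t <= T)%N -> forall i, in_simplex_pos (p t i)) ->
    is_run alpha T p jt w etas ->
    small_gradient T p jt w ->
    forall t : nat, (t < T)%N ->
      phi alpha T p jt w t.+1 <= phi alpha T p jt w t.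
Proof.
move=> /andP[alpha_gt0 alpha_lt_half].
have [m0 | m_gt0] := posnP m.
  exists 0%N => T _ p jt w etas _ _ _ t _; subst m.
  rewrite /phi !big_ord0 !big1 => [| s _ | s _]; rewrite ?big_ord0 //.
  by rewrite expr0n /= !mulr0 !mul0r.
pose eps : R := (10000 * m%:R ^+ 2)^-1.
have [T0 T0_large] := eventually_le_ln_sqrt ((ln (4 * m%:R) - ln eps) / (1 - 2 * alpha)).
(* The reports only enter through the gradient bounds of small_gradient. *)
exists (maxn 2 T0) => T; rewrite geq_max => /andP[T_ge2 T0_le] p jt w etas _ run grad_small.
have n_gt0 : (0 < n)%N by case: (jt 0%N) => k; apply: leq_ltn_trans.
exact: phi_succ_le alpha_gt0 alpha_lt_half m_gt0 n_gt0 T_ge2 run grad_small (T0_large T T0_le).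
Qed.
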